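(* Let $h:\mathbb{R}^d\to\mathbb{R}^d$ satisfy $\|h(w)-h(w')\|\le\kappa\|w-w'\|$ for all $w,w'$, for some $\kappa\in[0,1)$ and some norm $\|\cdot\|$, and let $w_*$ be its fixed point; set $g(w)=h(w)-w$. Let $\|\cdot\|_m$, $l_{cm}$, $u_{cm}$ be as in the context. Then for any iterate $w_{t_m}$ (indeed for any point $w_{t_m}\in\mathbb{R}^d$), $$\big\langle\nabla\|w_{t_m}-w_*\|_m^2,\;g(w_{t_m})\big\rangle\le-2\Big(1-\frac{u_{cm}}{l_{cm}}\kappa\Big)\|w_{t_m}-w_*\|_m^2.$$
   Context: Moreau envelope construction: fix a norm $\|\cdot\|_s$ on $\mathbb{R}^d$ such that $\frac12\|\cdot\|_s^2$ is $L$-smooth w.r.t. $\|\cdot\|_s$ (e.g. an $\ell_p$ norm with $p\ge2$), and a constant $\xi>0$. Define $M(w)=\inf_{u\in\mathbb{R}^d}\{\frac12\|u\|^2+\frac1{2\xi}\|w-u\|_s^2\}$. It is known that $M$ is differentiable ($\frac L\xi$-smooth w.r.t. $\|\cdot\|_s$) and that there is a norm $\|\cdot\|_m$ with $M(w)=\frac12\|w\|_m^2$; $\nabla\|w\|_m^2$ denotes the gradient of $w\mapsto\|w\|_m^2=2M(w)$. Let $l_{cs},u_{cs}>0$ satisfy $l_{cs}\|w\|_s\le\|w\|\le u_{cs}\|w\|_s$ for all $w$, and set $l_{cm}=\sqrt{1+\xi l_{cs}^2}$, $u_{cm}=\sqrt{1+\xi u_{cs}^2}$, so that $l_{cm}\|w\|_m\le\|w\|\le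 u_{cm}\|w\|_m$. $\langle\cdot,\cdot\rangle$ is the Euclidean inner product. *)

From HB Require Import structures.
From mathcomp Require Import all_boot all_order all_algebra.
From mathcomp Require Import all_classical all_reals all_analysis.
Set Implicit Arguments. Unset Strict Implicit. Unset Printing Implicit Defensive.
Import Order.TTheory GRing.Theory Num.Theory.
Import numFieldNormedType.Exports.
Local Open Scope classical_set_scope.
Local Open Scope ring_scope.

Section Defs.
Variables (R : realType) (d : nat).

Definition is_norm (N : 'rV[R]_d -> R) : Prop :=
  [/\ (forall x, 0 <= N x),
      (forall x, N x = 0 -> x = 0),
      (forall (a : R) x, N (a *: x) = `|a| * N x) &
      (forall x y, N (x + y) <= N x + N y)].

Definition dotp (u v : 'rV[R]_d) : R := \sum_(i < d) u ord0 i * v ord0 i.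

Definition grad (f : 'rV[R]_d -> R) (x : 'rV[R]_d) : 'rV[R]_d :=
  \row_(i < d) ('D_(delta_mx ord0 i) f x).

Definition L_smooth (N : 'rV[R]_d -> R) (L : R) (f : 'rV[R]_d -> R) : Prop :=
  (forall x, differentiable f x) /\
  (forall x y, f y <= f x + dotp (grad f x) (y - x) + L / 2 * N (y - x) ^+ 2).

Definition moreau (nrm ns : 'rV[R]_d -> R) (xi : R) (w : 'rV[R]_d) : R :=
  inf (range (fun u : 'rV[R]_d => 2^-1 * nrm u ^+ 2 + (2 * xi)^-1 * ns (w - u) ^+ 2)).

(* ||w||_m, determined by M(w) = 1/2 ||w||_m^2 *)
Definition normm (nrm ns : 'rV[R]_d -> R) (xi : R) (w : 'rV[R]_d) : R :=
  Num.sqrt (2 * moreau nrm ns xi w).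

End Defs.

Definition lcm_const (R : realType) (xi lcs : R) : R := Num.sqrt (1 + xi * lcs ^+ 2).
Definition ucm_const (R : realType) (xi ucs : R) : R := Num.sqrt (1 + xi * ucs ^+ 2).

From HB Require Import structures.
From mathcomp Require Import all_boot all_order all_algebra.
From mathcomp Require Import all_classical all_reals all_analysis.
From mathcomp Require Import ring lra.
Import Order.TTheory GRing.Theory Num.Theory.
Import numFieldNormedType.Exports.
Local Open Scope classical_set_scope.
Local Open Scope ring_scope.

(* Write M for the Moreau envelope, so ||.||_m^2 = 2 M, and put x = w - w*,
   y = h w - w*, so that w + t (h w - w) - w* = (1 - t) x + t y.  As an infimal
   convolution of two squared norms, M satisfies
   M (A x + B y) <= A^2 M x / l + B^2 M y / (1 - l) for all 0 < l < 1, and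
   comparing M with ||.||^2 turns ||y|| <= kappa ||x|| into M y <= a^2 M x with
   a = u_cm kappa / l_cm.  For l = 1 - t (a + t) this bounds the difference
   quotient of 2 M (. - w* ) at w along h w - w by -2 (1 - a) 2 M x + O(t), and
   letting t -> 0+ bounds the directional derivative, i.e. the inner product. *)

Section RealInequalities.
Set Implicit Arguments. Unset Strict Implicit.
Variable R : realFieldType.

Lemma sqr_addr_le_weighted (p q l : R) : 0 < l < 1 ->
  (p + q) ^+ 2 <= p ^+ 2 / l + q ^+ 2 / (1 - l).
Proof.
move=> /andP[l_gt0 l_lt1]; have l'_gt0 : 0 < 1 - l by rewrite subr_gt0.
rewrite -subr_ge0.
have -> : p ^+ 2 / l + q ^+ 2 / (1 - l) - (p + q) ^+ 2
    = ((1 - l) * p - l * q) ^+ 2 / (l * (1 - l)).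
  by field; rewrite !gt_eqF.
by rewrite divr_ge0 ?sqr_ge0 // mulr_ge0 ?ltW.
Qed.

(* The expression bounded here is the difference quotient of the right-hand
   side of [moreau_scale_add] for l = 1 - t g.  Its limit X (g - 2) + B / g is
   minimal at g = a; taking g = a + t instead keeps g > 0 when a = 0. *)
Lemma split_quotient_le (X B a t : R) :
  0 <= X -> 0 <= a -> B <= a ^+ 2 * X -> 0 < t -> t * (2 * (a + 1)) < 1 ->
  t^-1 * ((1 - t) ^+ 2 * X / (1 - t * (a + t)) + t ^+ 2 * B / (t * (a + t)) - X)
    <= - 2 * (1 - a) * X + X * (1 + 2 * (a + 1) ^+ 2) * t.
Proof.
move=> X_ge0 a_ge0 B_le t_gt0 t_small.
have t_le1 : t <= 1 by nra.
have g_gt0 : 0 < a + t by rewrite ltr_wpDl.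
have l_gt0 : 0 < 1 - t * (a + t) by nra.
have -> : t^-1 * ((1 - t) ^+ 2 * X / (1 - t * (a + t)) + t ^+ 2 * B / (t * (a + t)) - X)
    = X * (a + t - 2) + B / (a + t) + t * X * (a + t - 1) ^+ 2 / (1 - t * (a + t)).
  by field; rewrite !gt_eqF.
have B_term : B / (a + t) <= a * X.
  rewrite ler_pdivrMr //; apply: le_trans B_le _.
  have -> : a * X * (a + t) = a ^+ 2 * X + a * X * t by ring.
  by rewrite lerDl !mulr_ge0 // ltW.
have sqr_le : (a + t - 1) ^+ 2 <= (a + 1) ^+ 2.
  have -> : (a + 1) ^+ 2 = (a + t - 1) ^+ 2 + (2 - t) * (2 * a + t) by ring.
  by rewrite lerDl mulr_ge0 //; lra.
have tX_ge0 : 0 <= t * X := mulr_ge0 (ltW t_gt0) X_ge0.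
have rest_term : t * X * (a + t - 1) ^+ 2 / (1 - t * (a + t)) <= 2 * (t * X * (a + 1) ^+ 2).
  have l2_ge1 : 1 <= (1 - t * (a + t)) * 2 by nra.
  rewrite ler_pdivrMr //; apply: le_trans (ler_wpM2l tX_ge0 sqr_le) _.
  have : 0 <= t * X * (a + 1) ^+ 2 := mulr_ge0 tX_ge0 (sqr_ge0 _).
  nra.
lra.
Qed.

End RealInequalities.

Section NormSquares.
Set Implicit Arguments. Unset Strict Implicit.
Variables (R : realType) (d : nat) (N : 'rV[R]_d -> R).
Hypothesis N_norm : is_norm N.

Lemma norm_scale_add_sqr_le (A B l : R) u v : 0 < l < 1 ->
  N (A *: u + B *: v) ^+ 2 <= A ^+ 2 * N u ^+ 2 / l + B ^+ 2 * N v ^+ 2 / (1 - l).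
Proof.
have [N_ge0 _ NZ ND] := N_norm; move=> l01.
have tri : N (A *: u + B *: v) <= `|A| * N u + `|B| * N v by rewrite -!NZ ND.
apply: le_trans (_ : (`|A| * N u + `|B| * N v) ^+ 2 <= _).
  by rewrite lerXn2r ?nnegrE // addr_ge0 // mulr_ge0.
rewrite -(real_normK (num_real A)) -(real_normK (num_real B)) -!exprMn.
exact: sqr_addr_le_weighted.
Qed.

End NormSquares.

Section MoreauEnvelope.
Set Implicit Arguments. Unset Strict Implicit.
Variables (R : realType) (d : nat) (nrm ns : 'rV[R]_d -> R) (xi : R).
Hypotheses (nrm_norm : is_norm nrm) (ns_norm : is_norm ns) (xi_gt0 : 0 < xi).

Local Notation M := (moreau nrm ns xi).
Local Notation phi w u := (2^-1 * nrm u ^+ 2 + (2 * xi)^-1 * ns (w - u) ^+ 2).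

Lemma moreau_obj_ge0 w u : 0 <= phi w u.
Proof.
case: nrm_norm ns_norm => [n_ge0 _ _ _] [s_ge0 _ _ _].
by rewrite addr_ge0 // mulr_ge0 ?invr_ge0 ?sqr_ge0 ?mulr_ge0 ?ltW.
Qed.

Lemma has_inf_moreau w : has_inf (range (fun u => phi w u)).
Proof.
split; first by exists (phi w 0), 0.
by exists 0 => _ [u _ <-]; exact: moreau_obj_ge0.
Qed.

Lemma moreau_le w u : M w <= phi w u.
Proof. by apply: ge_inf; [case: (has_inf_moreau w) | exists u]. Qed.

Lemma moreau_ge w (c : R) : (forall u, c <= phi w u) -> c <= M w.
Proof.
by move=> c_le; apply: lb_le_inf; [case: (has_inf_moreau w) | move=> _ [u _ <-]].
Qed.

Lemma moreau_ge0 w : 0 <= M w.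
Proof. by apply: moreau_ge => u; exact: moreau_obj_ge0. Qed.

Lemma moreau_approx w (e : R) : 0 < e -> exists u, phi w u < M w + e.
Proof.
by move=> e_gt0; have [_ [u _ <-]] := inf_adherent e_gt0 (has_inf_moreau w); exists u.
Qed.

Lemma moreau_scale_add (A B l : R) x y : 0 < l < 1 ->
  M (A *: x + B *: y) <= A ^+ 2 * M x / l + B ^+ 2 * M y / (1 - l).
Proof.
move=> l01; have /andP[l_gt0 l_lt1] := l01.
have l'_gt0 : 0 < 1 - l by rewrite subr_gt0.
set a := A ^+ 2 / l; set b := B ^+ 2 / (1 - l).
have a_ge0 : 0 <= a by rewrite divr_ge0 ?sqr_ge0 ?ltW.
have b_ge0 : 0 <= b by rewrite divr_ge0 ?sqr_ge0 ?ltW.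
apply/ler_addgt0Pr => e e_gt0.
have e'_gt0 : 0 < e / (a + b + 1) by rewrite divr_gt0 // ltr_wpDl ?addr_ge0.
have [u1 u1_le] := moreau_approx x e'_gt0.
have [u2 u2_le] := moreau_approx y e'_gt0.
apply: le_trans (moreau_le _ (A *: u1 + B *: u2)) _.
have -> : A *: x + B *: y - (A *: u1 + B *: u2) = A *: (x - u1) + B *: (y - u2).
  by rewrite !scalerBr opprD addrACA.
apply: le_trans (_ : a * phi x u1 + b * phi y u2 <= _).
  have -> : a * phi x u1 + b * phi y u2
      = 2^-1 * (A ^+ 2 * nrm u1 ^+ 2 / l + B ^+ 2 * nrm u2 ^+ 2 / (1 - l))
        + (2 * xi)^-1 * (A ^+ 2 * ns (x - u1) ^+ 2 / l
                          + B ^+ 2 * ns (y - u2) ^+ 2 / (1 - l)).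
    by rewrite /a /b; ring.
  apply: lerD; apply: ler_wpM2l; rewrite ?invr_ge0 ?mulr_ge0 ?(ltW xi_gt0) //.
    exact: norm_scale_add_sqr_le.
  exact: norm_scale_add_sqr_le.
apply: le_trans (_ : a * (M x + e / (a + b + 1)) + b * (M y + e / (a + b + 1)) <= _).
  by apply: lerD; apply: ler_wpM2l => //; exact: ltW.
have -> : a * (M x + e / (a + b + 1)) + b * (M y + e / (a + b + 1))
    = A ^+ 2 * M x / l + B ^+ 2 * M y / (1 - l) + (a + b) / (a + b + 1) * e.
  by rewrite /a /b; ring.
rewrite lerD2l ler_piMl ?(ltW e_gt0) // ler_pdivrMr ?ltr_wpDl ?addr_ge0 //.
by rewrite mul1r lerDl.
Qed.

Lemma sqr_norm_le_moreau (ucs : R) x : 0 < ucs -> (forall z, nrm z <= ucs * ns z) ->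
  nrm x ^+ 2 <= (1 + xi * ucs ^+ 2) * (2 * M x).
Proof.
move=> ucs_gt0 nrm_le; set C := xi * ucs ^+ 2.
have C_gt0 : 0 < C by rewrite mulr_gt0 // exprn_gt0.
have C2_gt0 : 0 < (1 + C) * 2 by rewrite mulr_gt0 ?addr_gt0.
rewrite mulrA -ler_pdivrMl //.
apply: moreau_ge => u.
case: nrm_norm ns_norm => [n_ge0 _ _ nD] [s_ge0 _ _ _].
set a := nrm u; set b := nrm (x - u); set S := ns (x - u).
have tri : nrm x <= a + b by have := nD u (x - u); rewrite subrKC.
have b_le : b ^+ 2 <= ucs ^+ 2 * S ^+ 2.
  by rewrite -exprMn lerXn2r ?nnegrE ?mulr_ge0 ?n_ge0 ?s_ge0 ?(ltW ucs_gt0) //; apply: nrm_le.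
have young : C * (a + b) ^+ 2 <= (1 + C) * (C * a ^+ 2 + b ^+ 2).
  have -> : (1 + C) * (C * a ^+ 2 + b ^+ 2) = C * (a + b) ^+ 2 + (C * a - b) ^+ 2 by ring.
  by rewrite lerDl sqr_ge0.
rewrite ler_pdivrMl // -(ler_pM2l C_gt0).
have -> : C * ((1 + C) * 2 * (2^-1 * a ^+ 2 + (2 * xi)^-1 * S ^+ 2))
    = (1 + C) * (C * a ^+ 2 + ucs ^+ 2 * S ^+ 2) by rewrite /C; field; rewrite gt_eqF.
apply: le_trans (ler_wpM2l (ltW C_gt0) (_ : nrm x ^+ 2 <= (a + b) ^+ 2)) _.
  by rewrite lerXn2r ?nnegrE ?addr_ge0 ?n_ge0.
apply: le_trans young _; apply: ler_wpM2l; first by rewrite addr_ge0 // ltW.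
by rewrite lerD2l.
Qed.

Lemma moreau_le_sqr_norm (lcs : R) y : 0 < lcs -> (forall z, lcs * ns z <= nrm z) ->
  (1 + xi * lcs ^+ 2) * (2 * M y) <= nrm y ^+ 2.
Proof.
move=> lcs_gt0 le_nrm; set c := xi * lcs ^+ 2.
have c_gt0 : 0 < c by rewrite mulr_gt0 // exprn_gt0.
have c1_gt0 : 0 < 1 + c by rewrite addr_gt0.
have [n_ge0 _ nZ _] := nrm_norm; have [s_ge0 _ sZ _] := ns_norm.
apply: le_trans (ler_wpM2l (ltW c1_gt0)
  (ler_wpM2l (ler0n _ 2) (moreau_le y ((1 + c)^-1 *: y)))) _.
have -> : y - (1 + c)^-1 *: y = (c / (1 + c)) *: y.
  by rewrite -[X in X - _]scale1r -scalerBl; congr (_ *: _); field; rewrite gt_eqF.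
rewrite nZ sZ !ger0_norm ?divr_ge0 ?invr_ge0 ?(ltW c_gt0) ?(ltW c1_gt0) //.
set n := nrm y; set S := ns y.
have S_le : c * S ^+ 2 <= xi * n ^+ 2.
  rewrite /c -mulrA ler_wpM2l ?(ltW xi_gt0) // -exprMn.
  by rewrite lerXn2r ?nnegrE ?mulr_ge0 ?s_ge0 ?n_ge0 ?(ltW lcs_gt0) //; apply: le_nrm.
have -> : (1 + c) * (2 * (2^-1 * ((1 + c)^-1 * n) ^+ 2
            + (2 * xi)^-1 * (c / (1 + c) * S) ^+ 2))
    = (n ^+ 2 + c / xi * (c * S ^+ 2)) / (1 + c).
  by field; rewrite !gt_eqF.
rewrite ler_pdivrMr //.
have -> : n ^+ 2 * (1 + c) = n ^+ 2 + c / xi * (xi * n ^+ 2) by field; rewrite gt_eqF.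
by rewrite lerD2l ler_wpM2l ?divr_ge0 ?(ltW c_gt0) ?(ltW xi_gt0).
Qed.

Lemma moreau_le_of_norm_le (lcs ucs k : R) x y :
  0 < lcs -> 0 < ucs ->
  (forall z, lcs * ns z <= nrm z) -> (forall z, nrm z <= ucs * ns z) ->
  0 <= k -> nrm y <= k * nrm x ->
  2 * M y <= (ucm_const xi ucs / lcm_const xi lcs * k) ^+ 2 * (2 * M x).
Proof.
move=> lcs_gt0 ucs_gt0 le_nrm nrm_le k_ge0 y_le.
have [n_ge0 _ _ _] := nrm_norm.
rewrite exprMn expr_div_n /ucm_const /lcm_const.
set P := 1 + xi * lcs ^+ 2; set Q := 1 + xi * ucs ^+ 2.
have P_gt0 : 0 < P by rewrite /P addr_gt0 ?mulr_gt0 ?exprn_gt0.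
have Q_ge0 : 0 <= Q := addr_ge0 ler01 (mulr_ge0 (ltW xi_gt0) (sqr_ge0 _)).
rewrite !sqr_sqrtr ?(ltW P_gt0) // -(ler_pM2l P_gt0).
apply: le_trans (moreau_le_sqr_norm y lcs_gt0 le_nrm) _.
apply: le_trans (_ : (k * nrm x) ^+ 2 <= _).
  by rewrite lerXn2r ?nnegrE ?mulr_ge0 ?n_ge0.
have -> : P * (Q / P * k ^+ 2 * (2 * M x)) = k ^+ 2 * (Q * (2 * M x)).
  by field; rewrite gt_eqF.
by rewrite exprMn ler_wpM2l ?sqr_ge0 ?sqr_norm_le_moreau.
Qed.

Lemma normm_sqr w : normm nrm ns xi w ^+ 2 = 2 * M w.
Proof. by rewrite sqr_sqrtr // mulr_ge0 // moreau_ge0. Qed.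

Lemma moreau_segment_quotient_le (a t : R) x y :
  0 <= a -> 2 * M y <= a ^+ 2 * (2 * M x) -> 0 < t -> t * (2 * (a + 1)) < 1 ->
  t^-1 * (2 * M ((1 - t) *: x + t *: y) - 2 * M x)
    <= - 2 * (1 - a) * (2 * M x) + 2 * M x * (1 + 2 * (a + 1) ^+ 2) * t.
Proof.
move=> a_ge0 y_le t_gt0 t_small.
have l01 : 0 < 1 - t * (a + t) < 1.
  by rewrite subr_gt0 ltrBlDr ltrDl mulr_gt0 ?ltr_wpDl //=; nra.
have X_ge0 : 0 <= 2 * M x by rewrite mulr_ge0 ?moreau_ge0.
apply: le_trans (split_quotient_le X_ge0 a_ge0 y_le t_gt0 t_small).
rewrite ler_wpM2l ?invr_ge0 ?(ltW t_gt0) // lerD2r.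
have -> : (1 - t) ^+ 2 * (2 * M x) / (1 - t * (a + t)) + t ^+ 2 * (2 * M y) / (t * (a + t))
    = 2 * ((1 - t) ^+ 2 * M x / (1 - t * (a + t))
           + t ^+ 2 * M y / (1 - (1 - t * (a + t)))).
  by rewrite subKr; ring.
by rewrite ler_pM2l // moreau_scale_add.
Qed.

End MoreauEnvelope.

Section DirectionalDerivative.
Set Implicit Arguments. Unset Strict Implicit.
Variable R : realType.

Lemma dotp_grad (d : nat) (F : 'rV[R]_d -> R) w v :
  differentiable F w -> dotp (grad F w) v = 'D_v F w.
Proof.
move=> dF; rewrite deriveE // {2}(row_sum_delta v) linear_sum /dotp.
by apply: eq_bigr => i _; rewrite mxE linearZ /= deriveE // mulrC.
Qed.

Lemma derive_le_of_quotient_le (V : normedModType R) (F : V -> R) (w v : V) (C K r : R) :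
  derivable F w v -> 0 < r ->
  (forall t, 0 < t < r -> t^-1 * (F (t *: v + w) - F w) <= C + K * t) ->
  'D_v F w <= C.
Proof.
move=> dF r_gt0 quot_le; apply/ler_addgt0Pr => e e_gt0.
have e2_gt0 : 0 < e / 2 by rewrite divr_gt0.
have /cvgrPdist_le/(_ _ e2_gt0) near_D := cvg_dnbhs_at_right dF.
have near_C : \forall t \near 0^'+, t^-1 *: ((F \o shift w) (t *: v) - F w) <= C + e / 2.
  have eK_gt0 : 0 < e / 2 / (`|K| + 1) by rewrite divr_gt0 // ltr_pwDr.
  near=> t.
  have t_gt0 : 0 < t by near: t; exact: nbhs_right_gt.
  have t_lt : t < r by near: t; exact: nbhs_right_lt.
  have t_small : t < e / 2 / (`|K| + 1) by near: t; exact: nbhs_right_lt.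
  apply: le_trans (quot_le t _) _; first by rewrite t_gt0.
  rewrite lerD2l; apply: le_trans (_ : `|K| * t <= _).
    by rewrite ler_wpM2r ?ler_norm ?ltW.
  move: t_small; rewrite ltr_pdivlMr ?ltr_pwDr // => /ltW; apply: le_trans.
  by rewrite mulrC; apply: ler_wpM2l; [exact: ltW | rewrite lerDl].
have [t [/= D_near C_near]] := filter_ex (filterI near_D near_C).
have := le_trans (ler_norm _) D_near.
rewrite /derive /=; lra.
Unshelve. all: end_near.
Qed.

End DirectionalDerivative.

Theorem lemma4 (R : realType) (d : nat) (nrm ns : 'rV[R]_d -> R)
  (L xi lcs ucs kappa : R) (h : 'rV[R]_d -> 'rV[R]_d) (wstar w : 'rV[R]_d) :
  is_norm nrm -> is_norm ns ->
  0 < L -> L_smooth ns L (fun x => 2^-1 * ns x ^+ 2) ->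
  0 < xi -> 0 < lcs -> 0 < ucs ->
  (forall x, lcs * ns x <= nrm x /\ nrm x <= ucs * ns x) ->
  (forall x, differentiable (moreau nrm ns xi) x) ->
  0 <= kappa -> kappa < 1 ->
  (forall x y, nrm (h x - h y) <= kappa * nrm (x - y)) ->
  h wstar = wstar ->
  dotp (grad (fun x => normm nrm ns xi (x - wstar) ^+ 2) w) (h w - w)
    <= - 2 * (1 - ucm_const xi ucs / lcm_const xi lcs * kappa)
         * normm nrm ns xi (w - wstar) ^+ 2.
Proof.
move=> nrm_norm ns_norm _ _ xi_gt0 lcs_gt0 ucs_gt0 nrm_equiv M_diff kappa_ge0 _
  h_contr h_fix.
set M := moreau nrm ns xi.
set a := ucm_const xi ucs / lcm_const xi lcs * kappa.
have a_ge0 : 0 <= a by rewrite !mulr_ge0 ?invr_ge0 ?sqrtr_ge0.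
have normmE := normm_sqr nrm_norm ns_norm xi_gt0.
have -> : (fun z => normm nrm ns xi (z - wstar) ^+ 2) = (fun z => 2 * M (z - wstar)).
  by apply/funext => z; rewrite normmE.
have F_diff : differentiable (fun z => 2 * M (z - wstar)) w.
  by apply: differentiableM => //; apply: differentiable_comp; last exact: M_diff.
rewrite dotp_grad // normmE.
have y_le : 2 * M (h w - wstar) <= a ^+ 2 * (2 * M (w - wstar)).
  apply: moreau_le_of_norm_le => // [z|z|]; first exact: (nrm_equiv z).1.
    exact: (nrm_equiv z).2.
  by rewrite -[in h w - _]h_fix; apply: h_contr.
apply: (derive_le_of_quotient_le (K := 2 * M (w - wstar) * (1 + 2 * (a + 1) ^+ 2))
  (diff_derivable F_diff) (_ : 0 < (2 * (a + 1))^-1)).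
  by rewrite invr_gt0 mulr_gt0 // ltr_wpDl.
move=> t /andP[t_gt0 t_small].
rewrite -[_^-1]mul1r ltr_pdivlMr ?mulr_gt0 ?ltr_wpDl // in t_small.
have -> : t *: (h w - w) + w - wstar = (1 - t) *: (w - wstar) + t *: (h w - wstar).
  by apply/matrixP => i j; rewrite !mxE; ring.
exact: moreau_segment_quotient_le.
Qed.
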